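(* Let $N\ge1$, $0<\alpha\le2$, $\gamma>0$, $p\in[0,1]$, and let $Y\in\mathrm{Herm}(N)$ be an invariant random matrix with characteristic function $$\mathbb E[\exp(i\mathrm{Tr}\,YS)]=\exp\big(-\gamma[p\,\nu_\alpha(\mathrm{Tr}\,S/\sqrt N)+(1-p)\,\nu_\alpha(-\mathrm{Tr}\,S/\sqrt N)]\big),\quad S\in\mathrm{Herm}(N).$$ Then $Y=yI_N/\sqrt N$, where $y$ is a real random variable with the Lévy $\alpha$-stable law given by $\mathbb E[\exp(iyk)]=\exp(-\gamma[p\,\nu_\alpha(k)+(1-p)\,\nu_\alpha(-k)])$, $k\in\mathbb R$.
   Context: $\nu_\alpha(u)=|u|^\alpha(1-i\,\mathrm{sgn}(u)\tan\frac{\pi\alpha}2)$ for $\alpha\ne1$ and $\nu_1(u)=|u|(1+\frac{2i}\pi\mathrm{sgn}(u)\log|u|)$. An invariant random matrix satisfies $UYU^\dagger\overset d=Y$ for all unitary $U$. The equality $Y=yI_N/\sqrt N$ is in distribution. *)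

From HB Require Import structures.
From mathcomp Require Import all_boot all_order all_algebra.
From mathcomp Require Import all_classical all_reals all_analysis.
From mathcomp Require Import complex.
Set Implicit Arguments. Unset Strict Implicit. Unset Printing Implicit Defensive.
Import Order.TTheory GRing.Theory Num.Theory.
Local Open Scope ring_scope.
Local Open Scope classical_set_scope.
Local Open Scope complex_scope.

Section Defs.
Context (R : realType).
Local Notation C := (R[i]).

Definition cexp (z : C) : C :=
  (expR (complex.Re z))%:C * (cos (complex.Im z) +i* sin (complex.Im z))%C.

Definition nu (alpha u : R) : C :=
  if alpha != 1 then
    (`|u| `^ alpha)%:C * (1 -i* (Num.sg u * tan (pi * alpha / 2)))%C
  else
    (`|u|)%:C * (1 +i* (2 / pi * Num.sg u * ln `|u|))%C.

Definition stable_exponent (alpha gamma p k : R) : C :=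
  - gamma%:C * (p%:C * nu alpha k + (1 - p)%:C * nu alpha (- k)).

Definition ctrmx (N : nat) (A : 'M[C]_N) : 'M[C]_N := map_mx (@conjc R) A^T.
Definition is_hermitian (N : nat) (A : 'M[C]_N) : Prop := ctrmx A = A.
Definition is_unitary (N : nat) (U : 'M[C]_N) : Prop := U *m ctrmx U = 1%:M.

(** Borel sigma-algebra on N x N complex matrices (generated by the real
    and imaginary parts of the entries) *)
Definition mx_gen (N : nat) : set (set 'M[C]_N) :=
  [set A | exists (i j : 'I_N) (B : set R), measurable B /\
     (A = [set M : 'M[C]_N | B (complex.Re (M i j))] \/ A = [set M : 'M[C]_N | B (complex.Im (M i j))])].
Definition mx_measurable (N : nat) (A : set 'M[C]_N) : Prop :=
  <<s (@mx_gen N) >> A.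

Section RandomMatrix.
Context (d : measure_display) (T : measurableType d).

Definition random_matrix (N : nat) (Y : T -> 'M[C]_N) : Prop :=
  forall i j, measurable_fun setT (fun t => complex.Re (Y t i j)) /\
              measurable_fun setT (fun t => complex.Im (Y t i j)).

(** E[exp(i Tr(Y S))] (Tr(Y S) is real for Hermitian Y, S; we take its real part) *)
Definition mx_charfun (P : probability T R) (N : nat) (Y : T -> 'M[C]_N)
    (S : 'M[C]_N) : C :=
  (Rintegral P setT (fun t => cos (complex.Re (\tr (Y t *m S)))) +i*
   Rintegral P setT (fun t => sin (complex.Re (\tr (Y t *m S)))))%C.

Definition unitarily_invariant (P : probability T R) (N : nat) (Y : T -> 'M[C]_N) : Prop :=
  forall U : 'M[C]_N, is_unitary U -> forall A, mx_measurable A ->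
    P ((fun t => U *m Y t *m ctrmx U) @^-1` A) = P (Y @^-1` A).
End RandomMatrix.

Definition real_charfun (mu : probability R R) (k : R) : C :=
  (Rintegral mu setT (fun x => cos (k * x)) +i*
   Rintegral mu setT (fun x => sin (k * x)))%C.

End Defs.

From HB Require Import structures.
From mathcomp Require Import all_boot all_order all_algebra.
From mathcomp Require Import all_classical all_reals all_analysis.
From mathcomp Require Import complex ring lra measurable_realfun.
Import Order.TTheory GRing.Theory Num.Theory.
Local Open Scope ring_scope.
Local Open Scope classical_set_scope.
Local Open Scope complex_scope.

(* If [Re (tr S) = 0], the hypothesis gives E[cos Tr(Y S)] = 1, so Tr(Y S) lies
   in 2 pi Z almost surely; applying this to S / (m + 1) for every m forces
   Tr(Y S) = 0 a.s.  Finitely many such S span the traceless Hermitian matrices,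
   hence Y is a.s. the scalar matrix (Re tr Y / N) I = (y / sqrt N) I with
   y = Re tr Y / sqrt N, and the hypothesis at S = (k / sqrt N) I is the
   characteristic function of y. *)

Section StableExponent.
Variable R : realType.

Lemma cexp0 : cexp (0 : R[i]) = 1.
Proof. by rewrite /cexp /= expR0 cos0 sin0 mul1r. Qed.

Lemma nu0 (alpha : R) : 0 < alpha -> nu alpha 0 = 0.
Proof.
move=> alpha_gt0; rewrite /nu normr0; case: ifP => _; last by rewrite mul0r.
by rewrite powR0 ?gt_eqF // mul0r.
Qed.

Lemma stable_exponent0 (alpha gamma p : R) :
  0 < alpha -> stable_exponent alpha gamma p 0 = 0.
Proof.
by move=> alpha_gt0; rewrite /stable_exponent oppr0 nu0 // !mulr0 addr0 mulr0.
Qed.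

End StableExponent.

Section CosineEq1.
Variable R : realType.

Lemma eq0_of_cos_eq1_small (x : R) : `|x| < pi -> cos x = 1 -> x = 0.
Proof.
move=> x_small cosx1; have sinx0 : sin x = 0 by apply: cos1sin0; rewrite cosx1 normr1.
case: (ltrgt0P x) => [x_gt0|x_lt0|//].
- suff : 0 < sin x by rewrite sinx0 ltxx.
  by apply: sin_gt0_pi; rewrite x_gt0 -(gtr0_norm x_gt0).
- suff : 0 < sin (- x) by rewrite sinN sinx0 oppr0 ltxx.
  by apply: sin_gt0_pi; rewrite oppr_gt0 x_lt0 -(ltr0_norm x_lt0).
Qed.

Lemma eq0_of_cos_div_eq1 (x : R) : (forall m : nat, cos (x / m.+1%:R) = 1) -> x = 0.
Proof.
move=> cos1; pose m := Num.bound (`|x| / pi).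
have m_gt0 : (0 : R) < m.+1%:R by rewrite ltr0n.
suff /eq0_of_cos_eq1_small/(_ (cos1 m))/eqP : `|x / m.+1%:R| < pi.
  by rewrite mulf_eq0 invr_eq0 (gt_eqF m_gt0) orbF => /eqP.
rewrite normrM [`|_^-1|]gtr0_norm ?invr_gt0 // ltr_pdivrMr //.
have := archi_boundP (divr_ge0 (normr_ge0 x) (ltW (pi_gt0 R))).
rewrite ltr_pdivrMr ?pi_gt0 // => /lt_le_trans; apply.
by rewrite mulrC ler_pM2l ?pi_gt0 // ler_nat.
Qed.

End CosineEq1.

Section HermitianProbes.
Variables (R : realType) (N : nat).
Local Notation C := R[i].
Local Notation Re := complex.Re.
Local Notation Im := complex.Im.
Implicit Types (A S : 'M[C]_N) (i j : 'I_N).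

Lemma Re_realM (r : R) (z : C) : Re (r%:C * z) = r * Re z.
Proof. by case: z => a b /=; rewrite mul0r subr0. Qed.

Lemma ctrmxE A i j : ctrmx A i j = (A j i)^*.
Proof. by rewrite !mxE. Qed.

Lemma hermitianP A : is_hermitian A <-> forall i j, A j i = (A i j)^*.
Proof.
split=> [hA i j | hA]; first by rewrite -ctrmxE hA.
by apply/matrixP => i j; rewrite ctrmxE hA conjcK.
Qed.

Lemma hermitian_scalar (r : R) : is_hermitian ((r%:C)%:M : 'M[C]_N).
Proof. by apply/hermitianP => i j; rewrite !mxE rmorphMn /= oppr0 eq_sym. Qed.

Lemma hermitianD A S : is_hermitian A -> is_hermitian S -> is_hermitian (A + S).
Proof.
by move=> /hermitianP hA /hermitianP hS; apply/hermitianP => i j; rewrite !mxE hA hS rmorphD.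
Qed.

Lemma hermitianN A : is_hermitian A -> is_hermitian (- A).
Proof. by move=> /hermitianP hA; apply/hermitianP => i j; rewrite !mxE hA rmorphN. Qed.

Lemma hermitianZ (r : R) A : is_hermitian A -> is_hermitian (r%:C *: A).
Proof.
by move=> /hermitianP hA; apply/hermitianP => i j; rewrite !mxE hA rmorphM /= oppr0.
Qed.

Lemma mxtrace_mul_delta A i j : \tr (A *m delta_mx i j) = A j i.
Proof.
rewrite mxtrace_mulC /mxtrace (bigD1 i) //= big1 ?addr0 => [|k ki].
  rewrite mxE (bigD1 j) //= big1 ?addr0 => [|l lj]; first by rewrite mxE !eqxx mul1r.
  by rewrite mxE (negbTE lj) andbF mul0r.
by rewrite mxE big1 // => l _; rewrite mxE (negbTE ki) mul0r.
Qed.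

Definition hsym i j : 'M[C]_N := delta_mx i j + delta_mx j i.
Definition hskew i j : 'M[C]_N := 'i *: (delta_mx i j - delta_mx j i).

Lemma hermitian_hsym i j : is_hermitian (hsym i j).
Proof.
apply/hermitianP => a b; rewrite !mxE rmorphD /= !conjc_nat.
by rewrite addrC (andbC (b == i)) (andbC (b == j)).
Qed.

Lemma hermitian_hskew i j : is_hermitian (hskew i j).
Proof.
apply/hermitianP => a b; rewrite !mxE rmorphM rmorphB /= !conjc_nat.
have -> : (-1)*i = - 'i :> C by apply/eqP; rewrite eq_complex /= oppr0 !eqxx.
by rewrite mulNr -mulrN opprB (andbC (b == i)) (andbC (b == j)).
Qed.

Lemma Re_trace_mul_hsym A i j :
  is_hermitian A -> Re (\tr (A *m hsym i j)) = 2 * Re (A i j).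
Proof.
move=> /hermitianP hA; rewrite /hsym mulmxDr mxtraceD !mxtrace_mul_delta hA.
by case: (A i j) => a b /=; rewrite mulr2n mulrDl mul1r.
Qed.

Lemma Re_trace_mul_hskew A i j :
  is_hermitian A -> Re (\tr (A *m hskew i j)) = 2 * Im (A i j).
Proof.
move=> /hermitianP hA; rewrite /hskew -scalemxAr mxtraceZ mulmxBr raddfB /=.
rewrite !mxtrace_mul_delta hA.
by case: (A i j) => a b /=; lra.
Qed.

Lemma Re_trace_hsym i j : Re (\tr (hsym i j)) = 2 * (i == j)%:R.
Proof.
rewrite -[hsym i j]mul1mx Re_trace_mul_hsym; last exact: hermitian_scalar 1.
by rewrite mxE; case: eqP.
Qed.

Lemma Re_trace_hskew i j : Re (\tr (hskew i j)) = 0.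
Proof.
rewrite -[hskew i j]mul1mx Re_trace_mul_hskew; last exact: hermitian_scalar 1.
by rewrite mxE; case: eqP; rewrite mulr0.
Qed.

Definition traceless S : 'M[C]_N := S - ((Re (\tr S) / N%:R)%:C)%:M.

Lemma hermitian_traceless S : is_hermitian S -> is_hermitian (traceless S).
Proof. by move=> hS; apply: hermitianD => //; apply/hermitianN/hermitian_scalar. Qed.

Lemma Re_trace_traceless S : (0 < N)%N -> Re (\tr (traceless S)) = 0.
Proof.
move=> N_gt0; rewrite /traceless raddfB /= mxtrace_scalar raddfB /= raddfMn /=.
by rewrite -[X in _ - X]mulr_natr divfK ?subrr // pnatr_eq0 -lt0n.
Qed.

Lemma Re_trace_mul_traceless A S :
  Re (\tr (A *m traceless S)) = Re (\tr (A *m S)) - Re (\tr S) / N%:R * Re (\tr A).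
Proof.
by rewrite /traceless mulmxBr mul_mx_scalar raddfB /= mxtraceZ raddfB /= Re_realM.
Qed.

Lemma Re_trace_mulmxZ A (r : R) S :
  Re (\tr (A *m (r%:C *: S))) = r * Re (\tr (A *m S)).
Proof. by rewrite -scalemxAr mxtraceZ Re_realM. Qed.

(* A finite family spanning the traceless Hermitian matrices. *)
Definition probe (ijb : 'I_N * 'I_N * bool) : 'M[C]_N :=
  let: (i, j, b) := ijb in traceless (if b then hsym i j else hskew i j).

Lemma hermitian_probe ijb : is_hermitian (probe ijb).
Proof.
case: ijb => [[i j] []]; apply: hermitian_traceless;
  [exact: hermitian_hsym | exact: hermitian_hskew].
Qed.

Lemma Re_trace_probe ijb : (0 < N)%N -> Re (\tr (probe ijb)) = 0.
Proof. by case: ijb => [[i j] b]; apply: Re_trace_traceless. Qed.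

Lemma hermitian_probes_scalar A : is_hermitian A ->
  (forall ijb, Re (\tr (A *m probe ijb)) = 0) -> A = ((Re (\tr A) / N%:R)%:C)%:M.
Proof.
move=> hA orthA; apply/matrixP => i j.
have := orthA (i, j, true); have := orthA (i, j, false).
rewrite /= !Re_trace_mul_traceless Re_trace_mul_hsym // Re_trace_mul_hskew //.
rewrite Re_trace_hsym Re_trace_hskew !mxE !mul0r subr0.
case: (i == j) => /=; [rewrite mulr1n|rewrite mulr0n];
  case: (A i j) => a b /= b0 a_eq; congr Complex; lra.
Qed.

End HermitianProbes.

Section AlmostSureEquality.
Context d (T : measurableType d) (R : realType).

Lemma measure_ae_eq_sets (mu : {measure set T -> \bar R}) (A B : set T) :
  measurable A -> measurable B -> (\forall t \ae mu, A t <-> B t) -> mu A = mu B.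
Proof.
move=> mA mB [M [mM M0 AB_M]].
have M_null D : measurable D -> mu (D `&` M) = 0%E.
  move=> mD; apply/eqP; rewrite -measure_le0 -M0.
  by apply: le_measure; rewrite ?inE //; apply: measurableI.
rewrite (measureDI mu mA mM) (measureDI mu mB mM).
apply: congr2; last by transitivity (0 : \bar R); [|symmetry]; apply: M_null.
congr (mu _); apply/seteqP; split=> t [Dt Mt]; split=> //;
  by apply: contra_notP Mt => ABt; apply: AB_M => /= AB; apply: ABt; apply/AB.
Qed.

Variable P : probability T R.

Lemma integrable_bounded1 (f : T -> R) : measurable_fun setT f ->
  (forall t, `|f t| <= 1) -> P.-integrable setT (EFin \o f).
Proof.
move=> mf f_le1; apply: measurable_bounded_integrable => //.
- exact: le_lt_trans (probability_le1 P measurableT) (ltry 1).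
- by exists 1; split=> // M M_gt1 t _; apply: le_trans (f_le1 t) (ltW M_gt1).
Qed.

Lemma ae_eq1_of_Rintegral1 (f : T -> R) : P.-integrable setT (EFin \o f) ->
  (forall t, f t <= 1) -> Rintegral P setT f = 1 -> \forall t \ae P, f t = 1.
Proof.
move=> int_f f_le1 Ef1.
have int_1f : P.-integrable setT (EFin \o (fun t => 1 - f t)).
  by apply: (integrableB _ (finite_measure_integrable_cst _ _ _) int_f).
have : (\int[P]_t `|(1 - f t)%:E| = 0)%E.
  under eq_integral do rewrite gee0_abs ?lee_fin ?subr_ge0 //.
  rewrite integralB_EFin //; last exact: finite_measure_integrable_cst.
  have Ef_fin : (\int[P]_t (f t)%:E)%E \is a fin_num.
    by apply: integrable_fin_num.
  by rewrite integral_cst //= probability_setT mul1e -Ef1 /Rintegral fineK ?subee.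
move/(ae_eq_integral_abs _ measurableT (measurable_int _ int_1f)).
by apply: filterS => t /(_ I) /= [] /eqP; rewrite subr_eq0 eq_sym => /eqP.
Qed.

Lemma real_charfun_distribution (X : {mfun T >-> R}) (k : R) :
  real_charfun (distribution P X) k =
  (Rintegral P setT (fun t => cos (k * X t)) +i*
   Rintegral P setT (fun t => sin (k * X t)))%C.
Proof.
have mkX : measurable_fun setT (fun t => k * X t) by apply: measurable_funM.
have Rintegral_pushforward (g : R -> R) : measurable_fun setT g ->
    (forall x, `|g x| <= 1) ->
    Rintegral (distribution P X) setT (fun x => g (k * x)) =
    Rintegral P setT (fun t => g (k * X t)).
  move=> mg g_le1; rewrite /Rintegral integral_distribution //.
    by apply/measurable_EFinP; apply: measurableT_comp => //; apply: measurable_funM.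
  by apply: integrable_bounded1 => //; apply: measurableT_comp.
rewrite /real_charfun !Rintegral_pushforward //; try exact: sin_max; try exact: cos_max.
  exact: continuous_measurable_fun (@continuous_sin R).
exact: continuous_measurable_fun (@continuous_cos R).
Qed.

End AlmostSureEquality.

Section RandomMatrix.
Context d (T : measurableType d) (R : realType) (N : nat).
Local Notation C := R[i].
Local Notation Re := complex.Re.
Local Notation Im := complex.Im.

Lemma random_matrix_scalar (f : T -> R) : measurable_fun setT f ->
  random_matrix (fun t => ((f t)%:C)%:M : 'M[C]_N).
Proof.
move=> mf i j; split.
- have -> : (fun t => Re (((f t)%:C)%:M i j)) = fun t => f t *+ (i == j).
    by apply/funext => t; rewrite mxE raddfMn.
  by case: (i == j); [exact: mf | exact: measurable_cst].
- have -> : (fun t => Im (((f t)%:C)%:M i j)) = fun=> 0.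
    by apply/funext => t; rewrite mxE raddfMn /= mul0rn.
  exact: measurable_cst.
Qed.

Variable Y : T -> 'M[C]_N.
Hypothesis Y_meas : random_matrix Y.

Lemma measurable_preimage_random_matrix (A : set 'M[C]_N) :
  mx_measurable A -> measurable (Y @^-1` A).
Proof.
move=> mA; suff : image_set_system setT Y measurable A.
  by rewrite /image_set_system /= setTI.
apply: mA; split; first exact/sigma_algebra_image/sigma_algebra_measurable.
move=> _ [i [j [B [mB [->|->]]]]]; rewrite /image_set_system /=.
- exact: (Y_meas i j).1 measurableT B mB.
- exact: (Y_meas i j).2 measurableT B mB.
Qed.

Lemma measurable_Re_trace_mulmx (S : 'M[C]_N) :
  measurable_fun setT (fun t => Re (\tr (Y t *m S))).
Proof.
have -> : (fun t => Re (\tr (Y t *m S))) =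
    fun t => \sum_a \sum_b (Re (Y t a b) * Re (S b a) - Im (Y t a b) * Im (S b a)).
  apply/funext => t; rewrite /mxtrace raddf_sum; apply: eq_bigr => a _.
  by rewrite mxE raddf_sum; apply: eq_bigr => b _; case: (Y t a b) => ? ?; case: (S b a).
apply: measurable_sum => a; apply: measurable_sum => b.
apply: measurable_funB; apply: measurable_funM => //.
- exact: (Y_meas a b).1.
- exact: (Y_meas a b).2.
Qed.

End RandomMatrix.

Lemma mx_charfun_scalar d (T : measurableType d) (R : realType) (P : probability T R)
    (N : nat) (Y : T -> 'M[R[i]]_N) (c : R) :
  mx_charfun P Y ((c%:C)%:M) =
  (Rintegral P setT (fun t => cos (c * complex.Re (\tr (Y t)))) +i*
   Rintegral P setT (fun t => sin (c * complex.Re (\tr (Y t)))))%C.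
Proof.
by congr Complex; apply: eq_Rintegral => t _; rewrite mul_mx_scalar mxtraceZ Re_realM.
Qed.

Section TracelessCharfun.
Context {d} {T : measurableType d} {R : realType} {P : probability T R} {N : nat}.
Local Notation C := R[i].
Local Notation Re := complex.Re.
Context {Y : T -> 'M[C]_N}.
Hypotheses (N_gt0 : (0 < N)%N) (Y_meas : random_matrix Y).
Hypothesis Y_herm : forall t, is_hermitian (Y t).
Hypothesis charfun_traceless :
  forall S, is_hermitian S -> Re (\tr S) = 0 -> mx_charfun P Y S = 1.

Lemma ae_cos_Re_trace_eq1 S : is_hermitian S -> Re (\tr S) = 0 ->
  \forall t \ae P, cos (Re (\tr (Y t *m S))) = 1.
Proof.
move=> hS trS0; apply: ae_eq1_of_Rintegral1 => [|t|]; last 2 first.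
- exact: cos_le1.
- by have /(congr1 (@complex.Re R)) := charfun_traceless _ hS trS0.
apply: integrable_bounded1 => [|t]; last exact: cos_max.
apply: measurableT_comp; first exact: continuous_measurable_fun (@continuous_cos R).
exact: measurable_Re_trace_mulmx.
Qed.

Lemma ae_Re_trace_eq0 S : is_hermitian S -> Re (\tr S) = 0 ->
  \forall t \ae P, Re (\tr (Y t *m S)) = 0.
Proof.
move=> hS trS0.
have cos1 m : \forall t \ae P, cos (Re (\tr (Y t *m S)) / m.+1%:R) = 1.
  have hSm : is_hermitian ((m.+1%:R^-1)%:C *: S) by apply: hermitianZ.
  have trSm0 : Re (\tr ((m.+1%:R^-1)%:C *: S)) = 0.
    by rewrite mxtraceZ Re_realM trS0 mulr0.
  apply: filterS (ae_cos_Re_trace_eq1 _ hSm trSm0) => t.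
  by rewrite Re_trace_mulmxZ mulrC.
by apply: filterS (ae_foralln cos1) => t; apply: eq0_of_cos_div_eq1.
Qed.

Lemma ae_scalar_random_matrix :
  \forall t \ae P, Y t = ((Re (\tr (Y t)) / N%:R)%:C)%:M.
Proof.
apply: filterS (filter_forall _ (fun ijb =>
  ae_Re_trace_eq0 _ (hermitian_probe R N ijb) (Re_trace_probe R N ijb N_gt0))) => t.
by apply: hermitian_probes_scalar; apply: Y_herm.
Qed.

End TracelessCharfun.

Theorem corollary4p8 (R : realType) (N : nat) (alpha gamma p : R)
  (d : measure_display) (T : measurableType d) (P : probability T R)
  (Y : T -> 'M[R[i]]_N) :
  (0 < N)%N -> 0 < alpha <= 2 -> 0 < gamma -> 0 <= p <= 1 ->
  random_matrix Y -> (forall t, is_hermitian (Y t)) -> unitarily_invariant P Y ->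
  (forall S : 'M[R[i]]_N, is_hermitian S ->
     mx_charfun P Y S =
     cexp (stable_exponent alpha gamma p (complex.Re (\tr S) / Num.sqrt N%:R))) ->
  exists mu : probability R R,
    (forall k : R, real_charfun mu k = cexp (stable_exponent alpha gamma p k)) /\
    (forall A : set 'M[R[i]]_N, mx_measurable A ->
       P (Y @^-1` A) = mu [set y | A ((y / Num.sqrt N%:R)%:C)%:M]).
Proof.
move=> N_gt0 /andP[alpha_gt0 _] _ _ Y_meas Y_herm _ Y_charfun.
have charfun_traceless S :
    is_hermitian S -> complex.Re (\tr S) = 0 -> mx_charfun P Y S = 1.
  by move=> hS trS0; rewrite Y_charfun // trS0 mul0r stable_exponent0 // cexp0.
pose sN := Num.sqrt (N%:R : R).
have sN2 : sN * sN = N%:R by rewrite -expr2 sqr_sqrtr // ler0n.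
have sN_neq0 : sN != 0 by rewrite gt_eqF // sqrtr_gt0 ltr0n.
pose y t := complex.Re (\tr (Y t)) / sN.
have y_meas : measurable_fun setT y.
  apply: measurable_funM => //; under eq_fun do rewrite -[Y _]mulmx1.
  exact: measurable_Re_trace_mulmx.
exists (distribution P (mfun_Sub (mem_set y_meas))); split=> [k | A mA].
- rewrite real_charfun_distribution.
  have := Y_charfun _ (hermitian_scalar R N (k / sN)).
  rewrite mx_charfun_scalar mxtrace_scalar raddfMn /=.
  have -> : k / sN *+ N / sN = k by rewrite -mulr_natr -sN2; field.
  by move <-; congr Complex; apply: eq_Rintegral => t _ /=; rewrite mulrAC mulrA.
- apply: measure_ae_eq_sets; try exact: measurable_preimage_random_matrix.
    apply: measurable_preimage_random_matrix => //; apply: random_matrix_scalar.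
    by apply: measurable_funM.
  have := ae_scalar_random_matrix N_gt0 Y_meas Y_herm charfun_traceless.
  apply: filterS => t Yt.
  by rewrite /preimage /= {1}Yt /y -/sN -mulrA -invfM sN2.
Qed.
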